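(* Let $\Sigma$ be an infinite alphabet and let $\mathcal{A}_1$, $\mathcal{A}_2$ be guarded variable automata (GVAs) over $\Sigma$. Then there exist GVAs over $\Sigma$ recognizing, respectively, the concatenation $L(\mathcal{A}_1)\cdot L(\mathcal{A}_2)$, the Kleene closure $L(\mathcal{A}_1)^{\star}$, and the intersection $L(\mathcal{A}_1)\cap L(\mathcal{A}_2)$. That is, the class of GVA-recognizable languages is closed under concatenation, Kleene star and intersection.
   Context: Fix an infinite alphabet $\Sigma$. A guard over a set of variables $\mathcal{X}$ (disjoint from $\Sigma$) is built by the grammar $g ::= \mathit{true} \mid \alpha=\beta \mid \alpha\neq\beta \mid g\wedge g$ with $\alpha,\beta\in\Sigma\cup\mathcal{X}$. A GVA is a tuple $\mathcal{A}=\langle\Sigma,\mathcal{X},Q,Q_0,\delta,F,\kappa\rangle$ where $\mathcal{X}$ is a finite set of variables, $Q$ a finite set of states, $Q_0\subseteq Q$ the initial states, $F\subseteq Q$ the accepting states, $\delta$ a finite set of transitions $q\xrightarrow{\alpha,g}q'$ with $q,q'\in Q$, $\alpha\in\Sigma\cup\mathcal{X}\cup\{\varepsilon\}$ and $g$ a guard, and $\kappa:\mathcal{X}\to 2^{Q}$ the refreshing function ($\kappa(x)$ is the set of states in which $x$ is freed). The finite set $\Sigma_{\mathcal{A}}$ of letters occurring in $\delta$ are the constants of $\mathcal{A}$. A configuration is a pair $(\sigma,q)$ with $q\in Q$ and $\sigma$ a partial map $\mathcal{X}\to\Sigma$ (the currently bound variables). There is a step $(\sigma,q)\xrightarrow{a}(\sigma',q')$,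 $a\in\Sigma\cup\{\varepsilon\}$, if there is a transition $q\xrightarrow{\alpha,g}q'$ and a map $\gamma$ from the variables occurring in $\alpha$ or $g$ that are not in $\mathrm{dom}(\sigma)$ to $\Sigma$ such that, with $\rho=\sigma\uplus\gamma$ (extended to be the identity on letters), $\rho$ satisfies $g$, $a=\rho(\alpha)$ if $\alpha\neq\varepsilon$ and $a=\varepsilon$ if $\alpha=\varepsilon$, and $\sigma'$ is the restriction of $\rho$ to $\{x\in\mathrm{dom}(\rho) : q'\notin\kappa(x)\}$. A word $w\in\Sigma^{\star}$ is accepted if there is a sequence of steps from $(\emptyset,q_0)$ with $q_0\in Q_0$ to some $(\sigma,q_f)$ with $q_f\in F$ whose labels concatenate to $w$; $L(\mathcal{A})$ is the set of accepted words. *)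

From mathcomp Require Import all_boot.
From Stdlib Require List.
Set Implicit Arguments. Unset Strict Implicit. Unset Printing Implicit Defensive.

Definition infinite_alphabet (Sigma : Type) : Prop :=
  forall l : list Sigma, exists a : Sigma, ~ List.In a l.

Section GVADefs.
Variable Sigma : Type.

Inductive sym (X : Type) : Type :=
| SLet : Sigma -> sym X
| SVar : X -> sym X.

Inductive label (X : Type) : Type :=
| LEps : label X
| LSym : sym X -> label X.

Inductive guard (X : Type) : Type :=
| GTrue : guard X
| GEq : sym X -> sym X -> guard X
| GNeq : sym X -> sym X -> guard X
| GAnd : guard X -> guard X -> guard X.

Record GVA : Type := {
  gst : finType;
  gvar : finType;
  ginit : {set gst};
  gfinal : {set gst};
  gdelta : list (gst * label gvar * guard gvar * gst);
  gkappa : gvar -> {set gst}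
}.

Definition sym_vars (X : Type) (s : sym X) : seq X :=
  match s with SLet _ => [::] | SVar x => [:: x] end.

Definition label_vars (X : Type) (l : label X) : seq X :=
  match l with LEps => [::] | LSym s => sym_vars s end.

Fixpoint guard_vars (X : Type) (g : guard X) : seq X :=
  match g with
  | GTrue => [::]
  | GEq a b => sym_vars a ++ sym_vars b
  | GNeq a b => sym_vars a ++ sym_vars b
  | GAnd g1 g2 => guard_vars g1 ++ guard_vars g2
  end.

Definition sym_val (X : Type) (rho : X -> option Sigma) (s : sym X) : option Sigma :=
  match s with SLet a => Some a | SVar x => rho x end.

Fixpoint sat (X : Type) (rho : X -> option Sigma) (g : guard X) : Prop :=
  match g with
  | GTrue => True
  | GEq a b => exists c, sym_val rho a = Some c /\ sym_val rho b = Some c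
  | GNeq a b => exists c d, sym_val rho a = Some c /\ sym_val rho b = Some d /\ c <> d
  | GAnd g1 g2 => sat rho g1 /\ sat rho g2
  end.

(** One step (σ,q) -a-> (σ',q'), with a = None standing for ε. *)
Definition gstep (A : GVA) (sigma : gvar A -> option Sigma) (q : gst A)
    (a : option Sigma) (sigma' : gvar A -> option Sigma) (q' : gst A) : Prop :=
  exists (alpha : label (gvar A)) (g : guard (gvar A)),
    List.In (q, alpha, g, q') (gdelta A) /\
    exists rho : gvar A -> option Sigma,
      (* rho = sigma ⊎ gamma, gamma defined exactly on the variables of
         alpha, g that are not in dom sigma *)
      (forall x c, sigma x = Some c -> rho x = Some c) /\
      (forall x, sigma x = None ->
         (rho x <> None <-> (x \in label_vars alpha) || (x \in guard_vars g))) /\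
      sat rho g /\
      (match alpha with
       | LEps => a = None
       | LSym s => a <> None /\ a = sym_val rho s
       end) /\
      (forall x, sigma' x = if q' \in @gkappa A x then None else rho x).

Inductive gruns (A : GVA) :
    (gvar A -> option Sigma) -> gst A -> list Sigma ->
    (gvar A -> option Sigma) -> gst A -> Prop :=
| gruns_nil : forall sigma q, gruns sigma q nil sigma q
| gruns_cons : forall sigma q a sigma1 q1 w sigma2 q2,
    gstep sigma q a sigma1 q1 -> gruns sigma1 q1 w sigma2 q2 ->
    gruns sigma q (match a with None => w | Some b => b :: w end) sigma2 q2.

Definition empty_val (A : GVA) : gvar A -> option Sigma := fun _ => None.

Definition lang (A : GVA) (w : list Sigma) : Prop :=
  exists q0 sigma qf, q0 \in ginit A /\ qf \in gfinal A /\
    @gruns A (fun _ => None) q0 w sigma qf.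

Definition lconcat (L1 L2 : list Sigma -> Prop) (w : list Sigma) : Prop :=
  exists u v, L1 u /\ L2 v /\ w = u ++ v.

Inductive lstar (L : list Sigma -> Prop) : list Sigma -> Prop :=
| lstar_nil : lstar L nil
| lstar_app : forall u v, L u -> lstar L v -> lstar L (u ++ v).

Definition linter (L1 L2 : list Sigma -> Prop) (w : list Sigma) : Prop :=
  L1 w /\ L2 w.

Definition recognizes (A : GVA) (L : list Sigma -> Prop) : Prop :=
  forall w, lang A w <-> L w.

End GVADefs.

From mathcomp Require Import all_boot.
From Stdlib Require Import FunctionalExtensionality.
From Stdlib Require List.
Set Implicit Arguments. Unset Strict Implicit. Unset Printing Implicit Defensive.

(* Each construction runs copies of the given automata side by side.  For the
   concatenation, epsilon-transitions lead from the final states of A1 to the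
   initial states of A2, in whose states every variable of A1 is freed.  For
   the star, a fresh hub state, initial, accepting and freeing all variables,
   is linked by epsilon-transitions to the initial states and from the final
   states of A.  For the intersection, take the product of the state sets and
   the disjoint union of the variables: epsilon-transitions of either factor
   move that factor alone, while letter transitions are synchronised, the guard
   also equating the two symbols read.  Correctness reduces to transporting
   runs of a copy along an injective renaming of states and variables. *)

Lemma InE (T : eqType) (x : T) (s : seq T) : List.In x s <-> x \in s.
Proof.
elim: s => //= y s IH; rewrite in_cons; split.
- by case=> [->|/IH ->]; rewrite ?eqxx ?orbT.
- by case/orP=> [/eqP->|/IH]; auto.
Qed.

Section Renaming.
Variable Sigma : Type.

Definition map_sym (X Y : Type) (f : X -> Y) (s : sym Sigma X) : sym Sigma Y :=
  match s with SLet a => SLet Y a | SVar x => SVar Sigma (f x) end.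

Definition map_label (X Y : Type) (f : X -> Y) (l : label Sigma X) : label Sigma Y :=
  match l with LEps => LEps Sigma Y | LSym s => LSym (map_sym f s) end.

Fixpoint map_guard (X Y : Type) (f : X -> Y) (g : guard Sigma X) : guard Sigma Y :=
  match g with
  | GTrue => GTrue Sigma Y
  | GEq a b => GEq (map_sym f a) (map_sym f b)
  | GNeq a b => GNeq (map_sym f a) (map_sym f b)
  | GAnd g1 g2 => GAnd (map_guard f g1) (map_guard f g2)
  end.

Definition map_trans (Q1 Q2 X1 X2 : Type) (fq : Q1 -> Q2) (fx : X1 -> X2)
    (t : Q1 * label Sigma X1 * guard Sigma X1 * Q1) :
    Q2 * label Sigma X2 * guard Sigma X2 * Q2 :=
  let: (q, al, g, q') := t in (fq q, map_label fx al, map_guard fx g, fq q').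

Lemma sym_val_map (X Y : Type) (f : X -> Y) (rho : Y -> option Sigma) s :
  sym_val rho (map_sym f s) = sym_val (rho \o f) s.
Proof. by case: s. Qed.

Lemma sat_map (X Y : Type) (f : X -> Y) (rho : Y -> option Sigma) g :
  sat rho (map_guard f g) = sat (rho \o f) g.
Proof. by elim: g => //= [a b|a b|g1 -> g2 ->]; rewrite ?sym_val_map. Qed.

Lemma sym_vars_map (X Y : eqType) (f : X -> Y) (s : sym Sigma X) :
  sym_vars (map_sym f s) = map f (sym_vars s).
Proof. by case: s. Qed.

Lemma label_vars_map (X Y : eqType) (f : X -> Y) (l : label Sigma X) :
  label_vars (map_label f l) = map f (label_vars l).
Proof. by case: l => //= s; apply: sym_vars_map. Qed.

Lemma guard_vars_map (X Y : eqType) (f : X -> Y) (g : guard Sigma X) :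
  guard_vars (map_guard f g) = map f (guard_vars g).
Proof. by elim: g => //= [a b|a b|g1 -> g2 ->]; rewrite ?sym_vars_map ?map_cat. Qed.

End Renaming.

Section Runs.
Variables (Sigma : Type) (A : GVA Sigma).
Implicit Types (sigma : gvar A -> option Sigma) (q : gst A).

Definition fires (alpha : label Sigma (gvar A)) (g : guard Sigma (gvar A)) q'
    sigma (a : option Sigma) sigma' : Prop :=
  exists rho : gvar A -> option Sigma,
    (forall x c, sigma x = Some c -> rho x = Some c) /\
    (forall x, sigma x = None ->
       (rho x <> None <-> (x \in label_vars alpha) || (x \in guard_vars g))) /\
    sat rho g /\
    (match alpha with
     | LEps => a = None
     | LSym s => a <> None /\ a = sym_val rho s
     end) /\
    (forall x, sigma' x = if q' \in gkappa x then None else rho x).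

Lemma gstepE sigma q a sigma' q' :
  gstep sigma q a sigma' q' <->
  exists alpha g, List.In (q, alpha, g, q') (gdelta A) /\ fires alpha g q' sigma a sigma'.
Proof. exact: iff_refl. Qed.

Definition refresh sigma q' : gvar A -> option Sigma :=
  fun x => if q' \in gkappa x then None else sigma x.

Lemma refresh_empty q' : refresh (fun _ => None) q' = (fun _ => None).
Proof. by apply: functional_extensionality => x; rewrite /refresh; case: ifP. Qed.

Lemma fires_epsE q' sigma a sigma' :
  fires (LEps Sigma _) (GTrue Sigma _) q' sigma a sigma' <->
  a = None /\ sigma' = refresh sigma q'.
Proof.
split=> [[rho [Hext [Hdom [_ [-> Hres]]]]]|[-> ->]]; last by exists sigma.
split=> //; apply: functional_extensionality => x; rewrite Hres /refresh.
case: ifP => // _; case Es: (sigma x) => [c|]; first exact: Hext.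
by case: (rho x) (Hdom x Es) => // c [] /(_ ltac:(discriminate)).
Qed.

Lemma fires_eps_label al g q' sigma sigma' :
  fires al g q' sigma None sigma' -> al = LEps Sigma _.
Proof. by case: al => // s [rho [_ [_ [_ [[/(_ erefl) [] _] _]]]]]. Qed.

Lemma fires_eps_none g q' sigma a sigma' :
  fires (LEps Sigma _) g q' sigma a sigma' -> a = None.
Proof. by case=> rho [_ [_ [_ []]]]. Qed.

Lemma fires_letter_label al g q' sigma c sigma' :
  fires al g q' sigma (Some c) sigma' -> exists s, al = LSym s.
Proof. by case: al => [[rho [_ [_ [_ []]]]]|s _]; last exists s. Qed.

Lemma gstep_eps q q' sigma :
  List.In (q, LEps Sigma _, GTrue Sigma _, q') (gdelta A) ->
  gstep sigma q None (refresh sigma q') q'.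
Proof.
move=> Hin; apply/gstepE; exists (LEps Sigma _), (GTrue Sigma _).
by split=> //; apply/fires_epsE.
Qed.

Lemma gruns_step sigma q a sigma' q' :
  gstep sigma q a sigma' q' -> gruns sigma q (seq_of_opt a) sigma' q'.
Proof. by case: a => [c|] Hs; apply: (gruns_cons Hs (gruns_nil _ _)). Qed.

Lemma gruns_cat sigma q u sigma1 q1 v sigma2 q2 :
  gruns sigma q u sigma1 q1 -> gruns sigma1 q1 v sigma2 q2 -> gruns sigma q (u ++ v) sigma2 q2.
Proof.
elim=> // ? ? a ? ? w ? ? Hs _ IH /IH Hr.
by case: a Hs => [c|] Hs; apply: (gruns_cons Hs Hr).
Qed.

Lemma gruns_step_cat sigma q a sigma1 q1 w sigma2 q2 :
  gstep sigma q a sigma1 q1 -> gruns sigma1 q1 w sigma2 q2 ->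
  gruns sigma q (seq_of_opt a ++ w) sigma2 q2.
Proof. by move/gruns_step; apply: gruns_cat. Qed.

Lemma gruns_cons_inv sigma q c w sigma' q' :
  gruns sigma q (c :: w) sigma' q' ->
  exists sigma0 q0 sigma1 q1, gruns sigma q [::] sigma0 q0 /\
    gstep sigma0 q0 (Some c) sigma1 q1 /\ gruns sigma1 q1 w sigma' q'.
Proof.
move Ecw: (c :: w) => cw R; elim: R c w Ecw => // s0 p0 a s1 p1 w0 s2 p2 Hs R IH c w.
case: a Hs => [b|] Hs /= Ew.
  by case: Ew => -> ->; exists s0, p0, s1, p1; split; first exact: gruns_nil.
have [t0 [r0 [t1 [r1 [R0 [Hc R1]]]]]] := IH _ _ Ew.
by exists t0, r0, t1, r1; split=> //; apply: (gruns_step_cat Hs R0).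
Qed.

Definition fresh_at sigma q := forall x, q \in gkappa x -> sigma x = None.

Lemma gstep_fresh_at sigma q a sigma' q' : gstep sigma q a sigma' q' -> fresh_at sigma' q'.
Proof. by move=> [al [g [_ [rho [_ [_ [_ [_ Hres]]]]]]]] x Hx; rewrite Hres Hx. Qed.

Lemma gruns_fresh_at sigma q w sigma' q' :
  gruns sigma q w sigma' q' -> fresh_at sigma q -> fresh_at sigma' q'.
Proof. by elim=> // ? ? ? ? ? ? ? ? Hs _ IH _; apply/IH/(gstep_fresh_at Hs). Qed.

End Runs.

Section Embedding.
Variables (Sigma : Type) (A B : GVA Sigma).

(* A copy of [A] inside [B]: [A]'s variables are renamed injectively, and the
   remaining variables of [B] carry a fixed background valuation that the
   refreshing of [B] never has to clear at the image states. *)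
Record embedding := Embedding {
  emb_state : gst A -> gst B;
  emb_var : gvar A -> gvar B;
  emb_var_inv : gvar B -> option (gvar A);
  emb_var_invP : forall x y, emb_var_inv y = Some x <-> emb_var x = y;
  emb_bg : gvar B -> option Sigma;
  emb_kappa : forall x q, (emb_state q \in gkappa (emb_var x)) = (q \in gkappa x);
  emb_bg_fresh : forall y q, emb_var_inv y = None -> emb_state q \in gkappa y -> emb_bg y = None
}.

Variable e : embedding.
Local Notation fq := (emb_state e).
Local Notation fx := (emb_var e).

Definition extend (sigma : gvar A -> option Sigma) (y : gvar B) : option Sigma :=
  if emb_var_inv e y is Some x then sigma x else emb_bg e y.

Lemma emb_var_invK x : emb_var_inv e (fx x) = Some x.
Proof. exact/emb_var_invP. Qed.

Lemma emb_var_inj : injective fx.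
Proof. by move=> x1 x2 E; have := emb_var_invK x1; rewrite E emb_var_invK => -[]. Qed.

Lemma emb_var_inv_None y s : emb_var_inv e y = None -> y \in map fx s = false.
Proof. by move=> Hy; apply/negP => /mapP [x _ Ey]; rewrite Ey emb_var_invK in Hy. Qed.

Lemma extend_emb_var sigma : extend sigma \o fx = sigma.
Proof. by apply: functional_extensionality => x; rewrite /= /extend emb_var_invK. Qed.

Lemma extend_empty :
  (forall y, emb_bg e y = None) -> extend (fun _ => None) = (fun _ => None).
Proof.
move=> Hbg; apply: functional_extensionality => y.
by rewrite /extend; case: (emb_var_inv e y).
Qed.

Lemma fires_map al g q' sigma a sigma' :
  fires al g q' sigma a sigma' ->
  fires (map_label fx al) (map_guard fx g) (fq q') (extend sigma) a (extend sigma').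
Proof.
move=> [rho [Hext [Hdom [Hsat [Ha Hres]]]]].
exists (extend rho); split; [|split; [|split; [|split]]].
- by rewrite /extend => y c; case: (emb_var_inv e y) => [x|//]; apply: Hext.
- rewrite /extend label_vars_map guard_vars_map => y.
  case E: (emb_var_inv e y) => [x|]; last by move=> ->; rewrite !emb_var_inv_None.
  by move/emb_var_invP: E => <-; rewrite !(mem_map emb_var_inj); apply: Hdom.
- by rewrite sat_map extend_emb_var.
- by case: al Ha {Hdom} => //= s; rewrite sym_val_map extend_emb_var.
- rewrite /extend => y; case E: (emb_var_inv e y) => [x|].
  + by move/emb_var_invP: E => <-; rewrite Hres emb_kappa.
  + by case: ifP => // /(emb_bg_fresh E).
Qed.

Lemma fires_unmap al g q' sigma a tau' :
  fires (map_label fx al) (map_guard fx g) (fq q') (extend sigma) a tau' ->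
  exists sigma', tau' = extend sigma' /\ fires al g q' sigma a sigma'.
Proof.
move=> [rho [Hext [Hdom [Hsat [Ha Hres]]]]].
exists (tau' \o fx); split.
  apply: functional_extensionality => y; rewrite /extend.
  case E: (emb_var_inv e y) => [x|]; first by move/emb_var_invP: E => <-.
  (* [y] occurs in no renamed label or guard, so the step can neither bind it
     nor change its value. *)
  rewrite Hres; case: ifP => [/(emb_bg_fresh E) -> //|_].
  have := Hext y; have := Hdom y.
  rewrite /extend E label_vars_map guard_vars_map !emb_var_inv_None //.
  case: (emb_bg e y) => [c _ /(_ c erefl) //|/(_ erefl)].
  by case: (rho y) => // c [/(_ ltac:(discriminate))].
exists (rho \o fx); split; [|split; [|split; [|split]]].
- by move=> x c Hx; apply: Hext; rewrite /extend emb_var_invK.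
- move=> x Hx; have := Hdom (fx x).
  rewrite /extend emb_var_invK label_vars_map guard_vars_map !(mem_map emb_var_inj).
  exact.
- by rewrite -sat_map.
- by case: al Ha {Hdom} => //= s; rewrite sym_val_map.
- by move=> x; rewrite /= Hres emb_kappa.
Qed.

Lemma gstep_map q al g q' sigma a sigma' :
  List.In (map_trans fq fx (q, al, g, q')) (gdelta B) ->
  fires al g q' sigma a sigma' ->
  gstep (extend sigma) (fq q) a (extend sigma') (fq q').
Proof. by move=> Hin /fires_map Hf; apply/gstepE; do 2 eexists; split; first exact: Hin. Qed.

Lemma gstep_unmap q al g q' sigma a tau' :
  List.In (q, al, g, q') (gdelta A) ->
  fires (map_label fx al) (map_guard fx g) (fq q') (extend sigma) a tau' ->
  exists sigma', tau' = extend sigma' /\ gstep sigma q a sigma' q'.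
Proof.
move=> Hin /fires_unmap [sigma' [-> Hf]].
by exists sigma'; split=> //; apply/gstepE; exists al, g.
Qed.

Lemma gruns_map sigma q w sigma' q' :
  (forall t, List.In t (gdelta A) -> List.In (map_trans fq fx t) (gdelta B)) ->
  gruns sigma q w sigma' q' -> gruns (extend sigma) (fq q) w (extend sigma') (fq q').
Proof.
move=> HD; elim=> [|s0 p0 a s1 p1 w0 s2 p2 /gstepE [al [g [Hin Hf]]] _ IH].
  by move=> *; apply: gruns_nil.
exact: gruns_cons (gstep_map (HD _ Hin) Hf) IH.
Qed.

Lemma gruns_map_eps sigma q sigma' q' :
  (forall p g p', List.In (p, LEps Sigma _, g, p') (gdelta A) ->
     List.In (map_trans fq fx (p, LEps Sigma _, g, p')) (gdelta B)) ->
  gruns sigma q [::] sigma' q' -> gruns (extend sigma) (fq q) [::] (extend sigma') (fq q').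
Proof.
move=> HD; suff: forall w, gruns sigma q w sigma' q' -> w = [::] ->
    gruns (extend sigma) (fq q) w (extend sigma') (fq q') by move=> H /H; apply.
move=> w; elim=> [|s0 p0 a s1 p1 w0 s2 p2 Hs _ IH]; first by move=> *; apply: gruns_nil.
case: a Hs => [c //|] /gstepE [al [g [Hin Hf]]] /= Ew.
have Eal := fires_eps_label Hf; subst al.
exact: (gruns_cons (a := None)) (gstep_map (HD _ _ _ Hin) Hf) (IH Ew).
Qed.

End Embedding.

Definition getl (X Y : Type) (z : X + Y) : option X := if z is inl x then Some x else None.
Definition getr (X Y : Type) (z : X + Y) : option Y := if z is inr y then Some y else None.

Lemma getlP (X Y : Type) (x : X) (z : X + Y) : getl z = Some x <-> inl x = z.
Proof. by case: z => y /=; split=> // -[->]. Qed.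

Lemma getrP (X Y : Type) (y : Y) (z : X + Y) : getr z = Some y <-> inr y = z.
Proof. by case: z => x /=; split=> // -[->]. Qed.

Lemma SomeP (X : Type) (x y : X) : Some y = Some x <-> x = y.
Proof. by split=> [[->]|->]. Qed.

Section Concatenation.
Variables (Sigma : Type) (A1 A2 : GVA Sigma).

Definition concatG : GVA Sigma :=
  @Build_GVA Sigma (gst A1 + gst A2)%type (gvar A1 + gvar A2)%type
    [set inl q | q in ginit A1] [set inr q | q in gfinal A2]
    (List.map (map_trans inl inl) (gdelta A1) ++ List.map (map_trans inr inr) (gdelta A2) ++
     List.flat_map (fun f => List.map (fun q0 => (inl f, LEps Sigma _, GTrue Sigma _, inr q0))
                               (enum (ginit A2))) (enum (gfinal A1)))
    (fun z => match z with
              | inl x => [set inl q | q in gkappa x] :|: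
                         [set p | if p is inr _ then true else false]
              | inr y => [set inr q | q in gkappa y]
              end).

Local Notation empty := (fun _ => None).

Lemma concat_kappaL x q : (inl q \in @gkappa _ concatG (inl x)) = (q \in gkappa x).
Proof. by rewrite /= in_setU inE (mem_imset _ _ (@inl_inj _ _)) orbF. Qed.

Lemma concat_kappaR x q : (inr q \in @gkappa _ concatG (inr x)) = (q \in gkappa x).
Proof. by rewrite /= (mem_imset _ _ (@inr_inj _ _)). Qed.

Definition concat_embL : embedding A1 concatG :=
  @Embedding _ A1 concatG inl inl (@getl _ _) (@getlP _ _) empty concat_kappaL
    (fun _ _ _ _ => erefl).

Definition concat_embR : embedding A2 concatG :=
  @Embedding _ A2 concatG inr inr (@getr _ _) (@getrP _ _) empty concat_kappaR
    (fun _ _ _ _ => erefl).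

Lemma concat_deltaL t : List.In t (gdelta A1) -> List.In (map_trans inl inl t) (gdelta concatG).
Proof. by move=> Hin; apply/List.in_app_iff; left; apply: List.in_map. Qed.

Lemma concat_deltaR t : List.In t (gdelta A2) -> List.In (map_trans inr inr t) (gdelta concatG).
Proof.
by move=> Hin; apply/List.in_app_iff; right; apply/List.in_app_iff; left; apply: List.in_map.
Qed.

Lemma concat_delta_bridge f q0 : f \in gfinal A1 -> q0 \in ginit A2 ->
  List.In (inl f, LEps Sigma _, GTrue Sigma _, inr q0) (gdelta concatG).
Proof.
move=> Hf Hq0; apply/List.in_app_iff; right; apply/List.in_app_iff; right.
apply/List.in_flat_map; exists f; split; first by apply/InE; rewrite mem_enum.
by apply/List.in_map_iff; exists q0; split=> //; apply/InE; rewrite mem_enum.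
Qed.

Lemma concat_deltaP p be h p' : List.In (p, be, h, p') (gdelta concatG) ->
  [\/ exists2 t, List.In t (gdelta A1) & (p, be, h, p') = map_trans inl inl t,
      exists2 t, List.In t (gdelta A2) & (p, be, h, p') = map_trans inr inr t |
      exists2 f, f \in gfinal A1 & exists2 q0, q0 \in ginit A2 &
        (p, be, h, p') = (inl f, LEps Sigma _, GTrue Sigma _, inr q0)].
Proof.
case/List.in_app_iff=> [|/List.in_app_iff [|]].
- by case/List.in_map_iff=> t [<- Hin]; constructor 1; exists t.
- by case/List.in_map_iff=> t [<- Hin]; constructor 2; exists t.
case/List.in_flat_map=> f [/InE + /List.in_map_iff [q0 [<- /InE]]].
by rewrite !mem_enum => Hq0 Hf; constructor 3; exists f => //; exists q0.
Qed.

Lemma concat_kappa_bridge x q : inr q \in @gkappa _ concatG (inl x).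
Proof. by rewrite /= in_setU inE orbT. Qed.

Lemma refresh_concat_bridge sigma q :
  refresh (extend concat_embL sigma) (inr q) = extend concat_embR empty.
Proof.
apply: functional_extensionality => -[x|y]; rewrite /refresh; last by case: ifP.
by rewrite concat_kappa_bridge.
Qed.

Lemma concat_runs_right tau p w tau' p' : @gruns _ concatG tau p w tau' p' ->
  forall q sigma, p = inr q -> tau = extend concat_embR sigma ->
  exists sigma' q', p' = inr q' /\ gruns sigma q w sigma' q'.
Proof.
elim=> [t0 p0 q s -> _|t0 p0 a t1 p1 w0 t2 p2 /gstepE [be [h [Hin Hf]]] _ IH q s Ep Et].
  by exists s, q; split=> //; apply: gruns_nil.
subst p0 t0; case/concat_deltaP: Hin => [[[[[? ?] ?] ?] _ /= [] //]|[t Hin1 Et]|[f _ [q0 _ [] //]]].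
move: t Et Hin1 => [[[q1 al] g] q1'] /= [<- Ebe Eh Ep1] Hin1; subst be h p1.
have [s1 [Et1 Hs]] := gstep_unmap (e := concat_embR) Hin1 Hf.
have [s' [q' [-> R]]] := IH q1' s1 erefl Et1.
by exists s', q'; split=> //; apply: gruns_cons Hs R.
Qed.

Lemma concat_runs_left tau p w tau' p' : @gruns _ concatG tau p w tau' p' ->
  forall q sigma qf, p = inl q -> tau = extend concat_embL sigma -> p' = inr qf ->
  exists u v, w = u ++ v /\
    (exists sigma1 f, gruns sigma q u sigma1 f /\ f \in gfinal A1) /\
    (exists q0 sigma', q0 \in ginit A2 /\ gruns empty q0 v sigma' qf).
Proof.
elim=> [t0 p0 q s qf -> //|t0 p0 a t1 p1 w0 t2 p2 /gstepE [be [h [Hin Hf]]] R IH q s qf Ep Et Ep'].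
subst p0 t0.
case/concat_deltaP: Hin => [[t Hin1 Et]|[[[[? ?] ?] ?] _ /= [] //]|[f Hfin [q0 Hq0 E]]].
- move: t Et Hin1 => [[[q1 al] g] q1'] /= [<- Ebe Eh Ep1] Hin1; subst be h p1.
  have [s1 [Et1 Hs]] := gstep_unmap (e := concat_embL) Hin1 Hf.
  have [u [v [-> [[s1' [f [R1 Hfin]]] H2]]]] := IH q1' s1 qf erefl Et1 Ep'.
  exists (seq_of_opt a ++ u), v; split; first by rewrite -catA; case: (a).
  by split=> //; exists s1', f; split=> //; apply: gruns_step_cat Hs R1.
- case: E => Eq Ebe Eh Ep1; subst q be h p1; case/fires_epsE: Hf => -> Et1.
  rewrite refresh_concat_bridge in Et1.
  have [s' [q' [Ep2 R2]]] := concat_runs_right R erefl Et1.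
  move: Ep2; rewrite Ep' => -[Eqf]; subst q'.
  exists [::], w0; split=> //; split; first by exists s, f; split=> //; apply: gruns_nil.
  by exists q0, s'.
Qed.

Lemma concatG_correct : recognizes concatG (lconcat (lang A1) (lang A2)).
Proof.
have emptyL := extend_empty (e := concat_embL) (fun _ => erefl).
move=> w; split.
- move=> [p0 [tau [pf [/imsetP [q0 Hq0 ->] [/imsetP [qf Hqf ->] R]]]]].
  have [u [v [-> [[s1 [f [R1 Hf]]] [q1 [s' [Hq1 R2]]]]]]] :=
    concat_runs_left R erefl (esym emptyL) erefl.
  by exists u, v; split; [exists q0, s1, f|split=> //; exists q1, s', qf].
- move=> [u [v [[q1 [s1 [f1 [Hq1 [Hf1 R1]]]]] [[q2 [s2 [f2 [Hq2 [Hf2 R2]]]]] ->]]]].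
  exists (inl q1), (extend concat_embR s2), (inr f2).
  split; first exact: imset_f; split; first exact: imset_f.
  have := gruns_map (e := concat_embL) concat_deltaL R1; rewrite emptyL => R1'.
  apply: gruns_cat R1' (gruns_step_cat (gstep_eps _ (concat_delta_bridge Hf1 Hq2)) _).
  rewrite refresh_concat_bridge; exact: (gruns_map (e := concat_embR) concat_deltaR R2).
Qed.

End Concatenation.

Section Star.
Variables (Sigma : Type) (A : GVA Sigma).

Local Notation empty := (fun _ => None).

Definition starG : GVA Sigma :=
  @Build_GVA Sigma (option (gst A)) (gvar A) [set None] [set None]
    (List.map (map_trans Some id) (gdelta A) ++
     List.map (fun q0 => (None, LEps Sigma _, GTrue Sigma _, Some q0)) (enum (ginit A)) ++
     List.map (fun f => (Some f, LEps Sigma _, GTrue Sigma _, None)) (enum (gfinal A)))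
    (fun x => [set Some q | q in gkappa x] :|: [set None]).

Lemma star_kappa (x : gvar A) q : (Some q \in @gkappa _ starG x) = (q \in gkappa x).
Proof. by rewrite /= in_setU inE (mem_imset _ _ (@Some_inj _)) orbF. Qed.

Definition star_emb : embedding A starG :=
  @Embedding _ A starG Some id Some (@SomeP _) empty star_kappa
    (fun _ _ E => ltac:(discriminate E)).

Lemma extend_star sigma : extend star_emb sigma = sigma.
Proof. exact: functional_extensionality. Qed.

Lemma refresh_star_hub (tau : gvar A -> option Sigma) : @refresh _ starG tau None = empty.
Proof. by apply: functional_extensionality => x; rewrite /refresh in_setU inE eqxx orbT. Qed.

Lemma star_deltaP p be h p' : List.In (p, be, h, p') (gdelta starG) ->
  [\/ exists2 t, List.In t (gdelta A) & (p, be, h, p') = map_trans Some id t,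
      exists2 q0, q0 \in ginit A & (p, be, h, p') = (None, LEps Sigma _, GTrue Sigma _, Some q0) |
      exists2 f, f \in gfinal A & (p, be, h, p') = (Some f, LEps Sigma _, GTrue Sigma _, None)].
Proof.
case/List.in_app_iff=> [|/List.in_app_iff [|]] /List.in_map_iff [t [<- Hin]].
- by constructor 1; exists t.
- by constructor 2; exists t; rewrite // -mem_enum; apply/InE.
- by constructor 3; exists t; rewrite // -mem_enum; apply/InE.
Qed.

Lemma star_delta_lift t : List.In t (gdelta A) -> List.In (map_trans Some id t) (gdelta starG).
Proof. by move=> Hin; apply/List.in_app_iff; left; apply: List.in_map. Qed.

Lemma star_delta_entry q0 : q0 \in ginit A ->
  List.In (None, LEps Sigma _, GTrue Sigma _, Some q0) (gdelta starG).
Proof.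
move=> Hq0; apply/List.in_app_iff; right; apply/List.in_app_iff; left.
by apply/List.in_map_iff; exists q0; split=> //; apply/InE; rewrite mem_enum.
Qed.

Lemma star_delta_exit f : f \in gfinal A ->
  List.In (Some f, LEps Sigma _, GTrue Sigma _, None) (gdelta starG).
Proof.
move=> Hf; apply/List.in_app_iff; right; apply/List.in_app_iff; right.
by apply/List.in_map_iff; exists f; split=> //; apply/InE; rewrite mem_enum.
Qed.

Lemma star_runs_lstar w : lstar (lang A) w -> @gruns _ starG empty None w empty None.
Proof.
elim=> [|u v [q0 [s1 [f [Hq0 [Hf R]]]]] _ IH]; first exact: gruns_nil.
have := gstep_eps empty (star_delta_entry Hq0); rewrite refresh_empty => Hentry.
have := gstep_eps (A := starG) s1 (star_delta_exit Hf); rewrite refresh_star_hub => Hexit.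
have Hrun := gruns_map (e := star_emb) star_delta_lift R.
rewrite !extend_star in Hrun.
exact: gruns_step_cat Hentry (gruns_cat Hrun (gruns_step_cat Hexit IH)).
Qed.

Lemma star_runs_inv tau p w tau' : @gruns _ starG tau p w tau' None ->
  (p = None -> tau = empty -> lstar (lang A) w) /\
  (forall q, p = Some q -> exists u v, w = u ++ v /\
     (exists sigma1 f, @gruns _ A tau q u sigma1 f /\ f \in gfinal A) /\ lstar (lang A) v).
Proof.
move Ehub: {1}(@None (gst A)) => p' R.
elim: R Ehub => [t0 p0 <-|t0 p0 a t1 p1 w0 t2 p2 Hs _ IH /IH [IHhub IHin]].
  by split=> [_ _|//]; apply: lstar_nil.
case/gstepE: Hs => be [h [/star_deltaP Hin Hf]].
case: Hin => [[[[[q al] g] q'] Hin /= [Ep0 Ebe Eh Ep1]]|[q0 Hq0 [Ep0 Ebe Eh Ep1]]|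
               [f Hfin [Ep0 Ebe Eh Ep1]]]; subst p0 be h p1.
- split=> [//|q1 [<-]].
  have [s1 [Et1 Hs]] := gstep_unmap (e := star_emb) (sigma := t0) Hin Hf.
  rewrite extend_star in Et1; subst t1.
  have [u [v [-> [[s1' [f [R1 Hfin]]] Hv]]]] := IHin q' erefl.
  exists (seq_of_opt a ++ u), v; split; first by rewrite -catA; case: (a).
  by split=> //; exists s1', f; split=> //; apply: gruns_step_cat Hs R1.
- split=> [_ Et0|//]; case/fires_epsE: Hf => -> Et1.
  rewrite Et0 refresh_empty in Et1; subst t0 t1.
  have [u [v [-> [[s1 [f [R1 Hfin]]] Hv]]]] := IHin q0 erefl.
  by apply: lstar_app Hv; exists q0, s1, f.
- split=> [//|q1 [<-]]; case/fires_epsE: Hf => -> Et1.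
  rewrite refresh_star_hub in Et1; subst t1.
  exists [::], w0; split=> //; split; last exact: IHhub.
  by exists t0, f; split=> //; apply: gruns_nil.
Qed.

Lemma starG_correct : recognizes starG (lstar (lang A)).
Proof.
move=> w; split.
- by move=> [p0 [tau [pf [/set1P -> [/set1P -> /star_runs_inv [Hhub _]]]]]]; apply: Hhub.
- move=> Hw; exists None, empty, None; rewrite !inE.
  by split=> //; split=> //; apply: star_runs_lstar.
Qed.

End Star.

Lemma inl_in_map_inr (X Y : eqType) (x : X) (s : seq Y) : (inl x \in map inr s) = false.
Proof. by apply/mapP => -[]. Qed.

Lemma inr_in_map_inl (X Y : eqType) (y : Y) (s : seq X) : (inr y \in map inl s) = false.
Proof. by apply/mapP => -[]. Qed.

Section Intersection.
Variables (Sigma : Type) (A1 A2 : GVA Sigma).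

Local Notation empty := (fun _ => None).
Local Notation var := (gvar A1 + gvar A2)%type.

Definition is_eps_trans (Q X : Type) (t : Q * label Sigma X * guard Sigma X * Q) : bool :=
  if t is (_, LEps, _, _) then true else false.

Definition sync_guard (s1 : sym Sigma (gvar A1)) g1 (s2 : sym Sigma (gvar A2)) g2 :
    guard Sigma var :=
  GAnd (GAnd (map_guard inl g1) (map_guard inr g2)) (GEq (map_sym inl s1) (map_sym inr s2)).

Definition sync_trans (t1 : gst A1 * label Sigma (gvar A1) * guard Sigma (gvar A1) * gst A1)
    (t2 : gst A2 * label Sigma (gvar A2) * guard Sigma (gvar A2) * gst A2) :
    seq ((gst A1 * gst A2) * label Sigma var * guard Sigma var * (gst A1 * gst A2)) :=
  match t1, t2 with
  | (q1, LSym s1, g1, q1'), (q2, LSym s2, g2, q2') =>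
      [:: ((q1, q2), @LSym _ var (map_sym inl s1), sync_guard s1 g1 s2 g2, (q1', q2'))]
  | _, _ => [::]
  end.

Definition interG : GVA Sigma :=
  @Build_GVA Sigma (gst A1 * gst A2)%type var
    [set p | (p.1 \in ginit A1) && (p.2 \in ginit A2)]
    [set p | (p.1 \in gfinal A1) && (p.2 \in gfinal A2)]
    (List.flat_map (fun q2 => List.map (map_trans (fun q => (q, q2)) inl)
                                (List.filter (@is_eps_trans _ _) (gdelta A1))) (enum (gst A2)) ++
     List.flat_map (fun q1 => List.map (map_trans (pair q1) inr)
                                (List.filter (@is_eps_trans _ _) (gdelta A2))) (enum (gst A1)) ++
     List.flat_map (fun t1 => List.flat_map (sync_trans t1) (gdelta A2)) (gdelta A1))
    (fun z => match z with
              | inl x => [set p | p.1 \in gkappa x]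
              | inr y => [set p | p.2 \in gkappa y]
              end).

Definition vjoin (sigma1 : gvar A1 -> option Sigma) (sigma2 : gvar A2 -> option Sigma) (z : var) :=
  match z with inl x => sigma1 x | inr y => sigma2 y end.

Lemma vjoin_empty : vjoin empty empty = empty.
Proof. by apply: functional_extensionality => -[]. Qed.

Lemma vjoinK (tau : var -> option Sigma) : vjoin (tau \o inl) (tau \o inr) = tau.
Proof. by apply: functional_extensionality => -[]. Qed.

Section Components.
Variables (q1 : gst A1) (sigma1 : gvar A1 -> option Sigma).
Variables (q2 : gst A2) (sigma2 : gvar A2 -> option Sigma).
Hypotheses (fresh1 : fresh_at sigma1 q1) (fresh2 : fresh_at sigma2 q2).

Definition inter_embL : embedding A1 interG :=
  @Embedding _ A1 interG (fun q => (q, q2)) inl (@getl _ _) (@getlP _ _) (vjoin empty sigma2)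
    (fun x q => ltac:(by rewrite inE))
    (fun y q => ltac:(by case: y => [//|y] _; rewrite inE; apply: fresh2)).

Definition inter_embR : embedding A2 interG :=
  @Embedding _ A2 interG (pair q1) inr (@getr _ _) (@getrP _ _) (vjoin sigma1 empty)
    (fun x q => ltac:(by rewrite inE))
    (fun y q => ltac:(by case: y => [y|//] _; rewrite inE; apply: fresh1)).

Lemma extend_inter_embL sigma : extend inter_embL sigma = vjoin sigma sigma2.
Proof. by apply: functional_extensionality => -[]. Qed.

Lemma extend_inter_embR sigma : extend inter_embR sigma = vjoin sigma1 sigma.
Proof. by apply: functional_extensionality => -[]. Qed.

End Components.

Lemma inter_deltaL q2 q g q' : List.In (q, LEps Sigma _, g, q') (gdelta A1) ->
  List.In (map_trans (fun q => (q, q2)) inl (q, LEps Sigma _, g, q')) (gdelta interG).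
Proof.
move=> Hin; apply/List.in_app_iff; left; apply/List.in_flat_map.
exists q2; split; first by apply/InE; rewrite mem_enum.
by apply: List.in_map; apply/List.filter_In.
Qed.

Lemma inter_deltaR q1 q g q' : List.In (q, LEps Sigma _, g, q') (gdelta A2) ->
  List.In (map_trans (pair q1) inr (q, LEps Sigma _, g, q')) (gdelta interG).
Proof.
move=> Hin; apply/List.in_app_iff; right; apply/List.in_app_iff; left; apply/List.in_flat_map.
exists q1; split; first by apply/InE; rewrite mem_enum.
by apply: List.in_map; apply/List.filter_In.
Qed.

Lemma inter_delta_sync q1 s1 g1 q1' q2 s2 g2 q2' :
  List.In (q1, LSym s1, g1, q1') (gdelta A1) -> List.In (q2, LSym s2, g2, q2') (gdelta A2) ->
  List.In ((q1, q2), @LSym _ var (map_sym inl s1), sync_guard s1 g1 s2 g2, (q1', q2'))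
    (gdelta interG).
Proof.
move=> Hin1 Hin2; apply/List.in_app_iff; right; apply/List.in_app_iff; right.
apply/List.in_flat_map; exists (q1, LSym s1, g1, q1'); split=> //.
by apply/List.in_flat_map; exists (q2, LSym s2, g2, q2'); split=> //; left.
Qed.

Lemma inter_deltaP p be h p' : List.In (p, be, h, p') (gdelta interG) ->
  [\/ exists q2 q g q', List.In (q, LEps Sigma _, g, q') (gdelta A1) /\
        (p, be, h, p') = map_trans (fun q => (q, q2)) inl (q, LEps Sigma _, g, q'),
      exists q1 q g q', List.In (q, LEps Sigma _, g, q') (gdelta A2) /\
        (p, be, h, p') = map_trans (pair q1) inr (q, LEps Sigma _, g, q') |
      exists q1 s1 g1 q1' q2 s2 g2 q2', [/\ List.In (q1, LSym s1, g1, q1') (gdelta A1),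
        List.In (q2, LSym s2, g2, q2') (gdelta A2) &
        (p, be, h, p') =
          ((q1, q2), @LSym _ var (map_sym inl s1), sync_guard s1 g1 s2 g2, (q1', q2'))]].
Proof.
case/List.in_app_iff=> [|/List.in_app_iff [|]].
- case/List.in_flat_map=> q2 [_ /List.in_map_iff [[[[q al] g] q'] [<- /List.filter_In []]]].
  by case: al => // Hin _; constructor 1; exists q2, q, g, q'.
- case/List.in_flat_map=> q1 [_ /List.in_map_iff [[[[q al] g] q'] [<- /List.filter_In []]]].
  by case: al => // Hin _; constructor 2; exists q1, q, g, q'.
case/List.in_flat_map=> [[[[q1 al1] g1] q1'] [Hin1 /List.in_flat_map [[[[q2 al2] g2] q2'] [Hin2]]]].
case: al1 Hin1 => [|s1] Hin1; first by [].
case: al2 Hin2 => [|s2] Hin2; first by [].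
by case=> [<-|//]; constructor 3; exists q1, s1, g1, q1', q2, s2, g2, q2'.
Qed.

Lemma inter_eps_runL sigma q sigma' q' q2 sigma2 :
  gruns sigma q [::] sigma' q' -> fresh_at sigma2 q2 ->
  @gruns _ interG (vjoin sigma sigma2) (q, q2) [::] (vjoin sigma' sigma2) (q', q2).
Proof.
move=> R H2; have := gruns_map_eps (e := inter_embL H2) (@inter_deltaL q2) R.
by rewrite !extend_inter_embL.
Qed.

Lemma inter_eps_runR sigma q sigma' q' q1 sigma1 :
  gruns sigma q [::] sigma' q' -> fresh_at sigma1 q1 ->
  @gruns _ interG (vjoin sigma1 sigma) (q1, q) [::] (vjoin sigma1 sigma') (q1, q').
Proof.
move=> R H1; have := gruns_map_eps (e := inter_embR H1) (@inter_deltaR q1) R.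
by rewrite !extend_inter_embR.
Qed.

Lemma sync_varsL s1 g1 s2 g2 (x : gvar A1) :
  (inl x \in label_vars (@LSym _ var (map_sym inl s1))) ||
    (inl x \in guard_vars (sync_guard s1 g1 s2 g2)) =
  (x \in label_vars (LSym s1)) || (x \in guard_vars g1).
Proof.
rewrite /= !guard_vars_map !sym_vars_map !mem_cat !(mem_map (@inl_inj _ _)) !inl_in_map_inr /=.
by case: (x \in sym_vars s1); case: (x \in guard_vars g1); rewrite ?orbT ?orbF.
Qed.

Lemma sync_varsR s1 g1 s2 g2 (y : gvar A2) :
  (inr y \in label_vars (@LSym _ var (map_sym inl s1))) ||
    (inr y \in guard_vars (sync_guard s1 g1 s2 g2)) =
  (y \in label_vars (LSym s2)) || (y \in guard_vars g2).
Proof.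
rewrite /= !guard_vars_map !sym_vars_map !mem_cat !(mem_map (@inr_inj _ _)) !inr_in_map_inl /=.
exact: orbC.
Qed.

Lemma sync_fires s1 g1 q1' sigma1 sigma1' s2 g2 q2' sigma2 sigma2' c :
  fires (LSym s1) g1 q1' sigma1 (Some c) sigma1' ->
  fires (LSym s2) g2 q2' sigma2 (Some c) sigma2' ->
  fires (A := interG) (LSym (map_sym inl s1)) (sync_guard s1 g1 s2 g2) (q1', q2')
    (vjoin sigma1 sigma2) (Some c) (vjoin sigma1' sigma2').
Proof.
move=> [r1 [Hext1 [Hdom1 [Hsat1 [[_ Hc1] Hres1]]]]] [r2 [Hext2 [Hdom2 [Hsat2 [[_ Hc2] Hres2]]]]].
exists (vjoin r1 r2); split; [|split; [|split; [|split]]].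
- by case=> [x|y] /=; [apply: Hext1|apply: Hext2].
- by case=> [x|y] /= Hz; rewrite ?sync_varsL ?sync_varsR; [apply: Hdom1|apply: Hdom2].
- by rewrite /= !sat_map !sym_val_map; split; [split|exists c].
- by rewrite sym_val_map.
- by case=> [x|y] /=; rewrite inE ?Hres1 ?Hres2.
Qed.

Lemma sync_fires_inv s1 g1 q1' sigma1 s2 g2 q2' sigma2 a tau' :
  fires (A := interG) (LSym (map_sym inl s1)) (sync_guard s1 g1 s2 g2) (q1', q2')
    (vjoin sigma1 sigma2) a tau' ->
  exists c, a = Some c /\ fires (LSym s1) g1 q1' sigma1 a (tau' \o inl) /\
    fires (LSym s2) g2 q2' sigma2 a (tau' \o inr).
Proof.
move=> [r [Hext [Hdom [Hsat [[Ha Eal] Hres]]]]].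
move: Hsat; rewrite /= !sat_map !sym_val_map => -[[Hsat1 Hsat2] [c [Hc1 Hc2]]].
rewrite sym_val_map in Eal.
have Eac : a = Some c by rewrite Eal Hc1.
exists c; split=> //; split.
- exists (r \o inl); split; [|split; [|split; [|split]]] => //.
  + by move=> x c' Hx; apply: (Hext (inl x)).
  + by move=> x Hx; rewrite -(sync_varsL _ _ s2 g2); apply: (Hdom (inl x)).
  + by move=> x; rewrite /= Hres inE.
- exists (r \o inr); split; [|split; [|split; [|split]]] => //.
  + by move=> y c' Hy; apply: (Hext (inr y)).
  + by move=> y Hy; rewrite -(sync_varsR s1 g1); apply: (Hdom (inr y)).
  + by split=> //; rewrite Eac Hc2.
  + by move=> y; rewrite /= Hres inE.
Qed.

Lemma gstep_sync sigma1 q1 c sigma1' q1' sigma2 q2 sigma2' q2' :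
  gstep sigma1 q1 (Some c) sigma1' q1' -> gstep sigma2 q2 (Some c) sigma2' q2' ->
  @gstep _ interG (vjoin sigma1 sigma2) (q1, q2) (Some c) (vjoin sigma1' sigma2') (q1', q2').
Proof.
case/gstepE=> al1 [g1 [Hin1 Hf1]] /gstepE [al2 [g2 [Hin2 Hf2]]].
have [s1 Eal1] := fires_letter_label Hf1; have [s2 Eal2] := fires_letter_label Hf2.
subst al1 al2; apply/gstepE; do 2 eexists; split; first exact: inter_delta_sync Hin1 Hin2.
exact: sync_fires.
Qed.

Lemma inter_step_inv sigma1 q1 sigma2 q2 a tau' p' :
  @gstep _ interG (vjoin sigma1 sigma2) (q1, q2) a tau' p' ->
  fresh_at sigma1 q1 -> fresh_at sigma2 q2 ->
  exists sigma1' sigma2', tau' = vjoin sigma1' sigma2' /\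
    gruns sigma1 q1 (seq_of_opt a) sigma1' p'.1 /\ gruns sigma2 q2 (seq_of_opt a) sigma2' p'.2.
Proof.
case/gstepE=> be [h [/inter_deltaP Hin Hf]] H1 H2.
case: Hin => [[q2' [q [g [q' [Hin /= [Eq1 Eq2 Ebe Eh Ep']]]]]]|
              [q1' [q [g [q' [Hin /= [Eq1 Eq2 Ebe Eh Ep']]]]]]|
              [q1_ [s1 [g1 [q1' [q2_ [s2 [g2 [q2' [Hin1 Hin2 [Eq1 Eq2 Ebe Eh Ep']]]]]]]]]]];
  subst; [have Ea := fires_eps_none Hf; subst a..|].
- rewrite -(extend_inter_embL H2 sigma1) in Hf.
  have [s1' [-> Hs]] := gstep_unmap (e := inter_embL H2) Hin Hf.
  exists s1', sigma2; rewrite extend_inter_embL; split=> //.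
  by split; [exact: gruns_step Hs|exact: gruns_nil].
- rewrite -(extend_inter_embR H1 sigma2) in Hf.
  have [s2' [-> Hs]] := gstep_unmap (e := inter_embR H1) Hin Hf.
  exists sigma1, s2'; rewrite extend_inter_embR; split=> //.
  by split; [exact: gruns_nil|exact: gruns_step Hs].
- have [c [-> [Hf1 Hf2]]] := sync_fires_inv Hf.
  exists (tau' \o inl), (tau' \o inr); rewrite vjoinK; split=> //.
  by split; apply: gruns_step; apply/gstepE; [exists (LSym s1), g1|exists (LSym s2), g2].
Qed.

Lemma inter_runs_inv tau p w tau' p' : @gruns _ interG tau p w tau' p' ->
  forall sigma1 sigma2, tau = vjoin sigma1 sigma2 -> fresh_at sigma1 p.1 -> fresh_at sigma2 p.2 ->
  exists sigma1' sigma2', gruns sigma1 p.1 w sigma1' p'.1 /\ gruns sigma2 p.2 w sigma2' p'.2.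
Proof.
elim=> [t p0 s1 s2 _ _ _|t0 [q1 q2] a t1 p1 w0 t2 p2 Hs _ IH s1 s2 Et0 H1 H2].
  by exists s1, s2; split; apply: gruns_nil.
rewrite Et0 in Hs; have [s1' [s2' [Et1 [R1 R2]]]] := inter_step_inv Hs H1 H2.
have [s1'' [s2'' [R1' R2']]] := IH _ _ Et1 (gruns_fresh_at R1 H1) (gruns_fresh_at R2 H2).
exists s1'', s2''.
by case: a {Hs} R1 R2 => [c|] R1 R2; split; [exact: gruns_cat R1 R1'|exact: gruns_cat R2 R2'|
                                             exact: gruns_cat R1 R1'|exact: gruns_cat R2 R2'].
Qed.

Lemma inter_runs w : forall sigma1 q1 sigma2 q2 sigma1' f1 sigma2' f2,
  fresh_at sigma1 q1 -> fresh_at sigma2 q2 ->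
  gruns sigma1 q1 w sigma1' f1 -> gruns sigma2 q2 w sigma2' f2 ->
  @gruns _ interG (vjoin sigma1 sigma2) (q1, q2) w (vjoin sigma1' sigma2') (f1, f2).
Proof.
elim: w => [|c w IH] s1 q1 s2 q2 s1' f1 s2' f2 H1 H2 R1 R2.
  exact: gruns_cat (inter_eps_runL R1 H2) (inter_eps_runR R2 (gruns_fresh_at R1 H1)).
have [t1 [p1 [u1 [r1 [E1 [S1 R1']]]]]] := gruns_cons_inv R1.
have [t2 [p2 [u2 [r2 [E2 [S2 R2']]]]]] := gruns_cons_inv R2.
apply: gruns_cat (inter_eps_runL E1 H2) _.
apply: gruns_cat (inter_eps_runR E2 (gruns_fresh_at E1 H1)) _.
apply: gruns_cons (gstep_sync S1 S2) _.
exact: IH (gstep_fresh_at S1) (gstep_fresh_at S2) R1' R2'.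
Qed.

Lemma interG_correct : recognizes interG (linter (lang A1) (lang A2)).
Proof.
move=> w; split.
- move=> [[q1 q2] [tau [[f1 f2] [Hq [Hf R]]]]].
  move: Hq Hf; rewrite !inE /= => /andP [Hq1 Hq2] /andP [Hf1 Hf2].
  have [s1' [s2' [R1 R2]]] :=
    inter_runs_inv R (esym vjoin_empty) (fun _ _ => erefl) (fun _ _ => erefl).
  by split; [exists q1, s1', f1|exists q2, s2', f2].
- move=> [[q1 [s1 [f1 [Hq1 [Hf1 R1]]]]] [q2 [s2 [f2 [Hq2 [Hf2 R2]]]]]].
  exists (q1, q2), (vjoin s1 s2), (f1, f2); rewrite !inE /= Hq1 Hq2 Hf1 Hf2.
  by split=> //; split=> //; rewrite -vjoin_empty; apply: inter_runs.
Qed.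

End Intersection.

Theorem mainTheorem1 (Sigma : Type) (Hinf : infinite_alphabet Sigma)
    (A1 A2 : GVA Sigma) :
  (exists B : GVA Sigma, recognizes B (lconcat (lang A1) (lang A2))) /\
  (exists B : GVA Sigma, recognizes B (lstar (lang A1))) /\
  (exists B : GVA Sigma, recognizes B (linter (lang A1) (lang A2))).
Proof.
split; first by exists (concatG A1 A2); apply: concatG_correct.
split; first by exists (starG A1); apply: starG_correct.
by exists (interG A1 A2); apply: interG_correct.
Qed.
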